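(* Let $q\equiv1\pmod{12}$, and suppose $-1/2$ is a cube and $-1/3$ is a fourth power in $\mathbb{F}_q$. Then $-1/3$ is a square in $\mathbb{F}_q$, and the line $L_c$ through $\mathbf{P}(1,0,0,1)$ and $\mathbf{P}(0,0,1,0)$ and the line $\ell_{-1/3}$ through $\mathbf{P}(0,-1/3,0,1)$ and $\mathbf{P}(1,0,1,0)$ belong to the same orbit of $G_q$.
   Context: Points of $\mathrm{PG}(3,q)$ are written $\mathbf{P}(x_0,x_1,x_2,x_3)$ over $\mathbb{F}_q$. The twisted cubic is $\mathscr{C}=\{\mathbf{P}(t^3,t^2,t,1):t\in\mathbb{F}_q\}\cup\{\mathbf{P}(1,0,0,0)\}$ and $G_q$ is the group of projectivities of $\mathrm{PG}(3,q)$ fixing $\mathscr{C}$. Two lines are in the same orbit if an element of $G_q$ maps one onto the other. *)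

From HB Require Import structures.
From mathcomp Require Import all_boot all_order all_algebra.
Set Implicit Arguments. Unset Strict Implicit. Unset Printing Implicit Defensive.
Import GRing.Theory.
Local Open Scope ring_scope.

(* Homogeneous coordinates: a point P(x0,x1,x2,x3) of PG(3,q) is represented by
   a nonzero row vector of F^4; vectors are multiplied on the right by matrices. *)
Definition mkpt (F : fieldType) (a b c d : F) : 'rV[F]_4 :=
  \row_(i < 4) nth 0 [:: a; b; c; d] i.

Definition pt_eq (F : fieldType) (v w : 'rV[F]_4) : Prop :=
  exists c : F, c != 0 /\ v = c *: w.

Definition on_twisted_cubic (F : fieldType) (v : 'rV[F]_4) : Prop :=
  (exists t : F, pt_eq v (mkpt (t ^+ 3) (t ^+ 2) t 1)) \/ pt_eq v (mkpt 1 0 0 0).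

Definition in_Gq (F : fieldType) (M : 'M[F]_4) : Prop :=
  M \in unitmx /\
  forall v : 'rV[F]_4, v != 0 ->
    (on_twisted_cubic v <-> on_twisted_cubic (v *m M)).

Definition on_line (F : fieldType) (u w v : 'rV[F]_4) : Prop :=
  v != 0 /\ exists a b : F, v = a *: u + b *: w.

Definition same_line_orbit (F : fieldType) (u1 w1 u2 w2 : 'rV[F]_4) : Prop :=
  exists M : 'M[F]_4, in_Gq M /\
    forall v : 'rV[F]_4, v != 0 -> (on_line u1 w1 v <-> on_line u2 w2 (v *m M)).

(* The projectivities of PG(3,q) induced by the Moebius maps
   t |-> (a t + b) / (c t + d) of the projective line preserve the twisted
   cubic, so every invertible 2x2 matrix yields an element of G_q.
   Since q = 1 mod 4 the field has a square root i of -1, and writing the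
   hypotheses as z^3 = 2 and w^4 = -3, one explicit Moebius map with entries
   polynomial in z, w, i sends both spanning points of L_c into ell_{-1/3};
   being invertible, it maps the line L_c onto ell_{-1/3}.  The square root of
   -1/3 is the square of its fourth root. *)
From HB Require Import structures.
From mathcomp Require Import all_boot all_order all_algebra.
From mathcomp Require Import fingroup cyclic finfield ring zify.
Set Implicit Arguments.
Unset Strict Implicit.
Unset Printing Implicit Defensive.
Import GRing.Theory.
Local Open Scope ring_scope.

Section ProjectiveSpace.
Variable F : fieldType.
Implicit Types (a b c d k t u s : F) (v : 'rV[F]_4).

Notation i0 := (@Ordinal 4 0 isT).
Notation i1 := (@Ordinal 4 1 isT).
Notation i2 := (@Ordinal 4 2 isT).
Notation i3 := (@Ordinal 4 3 isT).

Lemma scale_mkpt k (x0 x1 x2 x3 : F) :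
  k *: mkpt x0 x1 x2 x3 = mkpt (k * x0) (k * x1) (k * x2) (k * x3).
Proof. by apply/rowP => j; rewrite !mxE; case: j => [[|[|[|[|j]]]] hj]. Qed.

Lemma add_mkpt (x0 x1 x2 x3 y0 y1 y2 y3 : F) :
  mkpt x0 x1 x2 x3 + mkpt y0 y1 y2 y3 =
  mkpt (x0 + y0) (x1 + y1) (x2 + y2) (x3 + y3).
Proof. by apply/rowP => j; rewrite !mxE; case: j => [[|[|[|[|j]]]] hj]. Qed.

Lemma mkpt_mulmx (x0 x1 x2 x3 : F) (M : 'M[F]_4) :
  mkpt x0 x1 x2 x3 *m M =
  mkpt (x0 * M i0 i0 + x1 * M i1 i0 + x2 * M i2 i0 + x3 * M i3 i0)
       (x0 * M i0 i1 + x1 * M i1 i1 + x2 * M i2 i1 + x3 * M i3 i1)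
       (x0 * M i0 i2 + x1 * M i1 i2 + x2 * M i2 i2 + x3 * M i3 i2)
       (x0 * M i0 i3 + x1 * M i1 i3 + x2 * M i2 i3 + x3 * M i3 i3).
Proof.
apply/rowP => j; rewrite !mxE !big_ord_recr big_ord0 /= !mxE /= add0r.
case: j => [[|[|[|[|j]]]] hj] //=; rewrite ?addrA;
  by repeat congr (_ + _); congr (_ * M _ _); apply: val_inj.
Qed.

(* Row k holds the coefficients of (a X + c Y)^(3-k) (b X + d Y)^k, so that the
   point of parameter t goes to the point of parameter (a t + b) / (c t + d). *)
Definition moebius_mx a b c d : 'M[F]_4 :=
  \matrix_(r < 4, j < 4) nth 0 (nth [::]
   [:: [:: a^+3; a^+2*c; a*c^+2; c^+3];
       [:: 3%:R*a^+2*b; a^+2*d + 2%:R*a*b*c; 2%:R*a*c*d + b*c^+2; 3%:R*c^+2*d];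
       [:: 3%:R*a*b^+2; b^+2*c + 2%:R*a*b*d; a*d^+2 + 2%:R*b*c*d; 3%:R*c*d^+2];
       [:: b^+3; b^+2*d; b*d^+2; d^+3]] r) j.

Lemma moebius_mx_adj a b c d :
  moebius_mx a b c d *m moebius_mx d (-b) (-c) a = ((a * d - b * c) ^+ 3)%:M.
Proof.
apply/matrixP => r j; rewrite !mxE !big_ord_recr big_ord0 /= !mxE /= add0r.
by case: r => [[|[|[|[|r]]]] hr] //=; case: j => [[|[|[|[|j]]]] hj] //=; ring.
Qed.

Lemma moebius_mx_unit a b c d :
  a * d - b * c != 0 -> moebius_mx a b c d \in unitmx.
Proof.
move=> det_neq0.
have /mulmx1_unit [] // : moebius_mx a b c d *m
    (((a * d - b * c) ^+ 3)^-1 *: moebius_mx d (-b) (-c) a) = 1%:M.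
by rewrite -scalemxAr moebius_mx_adj scale_scalar_mx mulVf // expf_neq0.
Qed.

Lemma moebius_mx_cubic_pt a b c d t :
  mkpt (t ^+ 3) (t ^+ 2) t 1 *m moebius_mx a b c d =
  mkpt ((a * t + b) ^+ 3) ((a * t + b) ^+ 2 * (c * t + d))
       ((a * t + b) * (c * t + d) ^+ 2) ((c * t + d) ^+ 3).
Proof. by rewrite mkpt_mulmx !mxE /=; congr mkpt; ring. Qed.

Lemma moebius_mx_cubic_inf a b c d :
  mkpt 1 0 0 0 *m moebius_mx a b c d = mkpt (a ^+ 3) (a ^+ 2 * c) (a * c ^+ 2) (c ^+ 3).
Proof. by rewrite mkpt_mulmx !mxE /=; congr mkpt; ring. Qed.

Lemma on_twisted_cubic_hom k u s : k != 0 -> (u != 0) || (s != 0) ->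
  on_twisted_cubic (k *: mkpt (u ^+ 3) (u ^+ 2 * s) (u * s ^+ 2) (s ^+ 3)).
Proof.
move=> k_neq0 /orP us_neq0; have [s0 | s_neq0] := eqVneq s 0.
  right; exists (k * u ^+ 3); split.
    by rewrite mulf_neq0 // expf_neq0 //; case: us_neq0; rewrite // s0 eqxx.
  by rewrite !scale_mkpt s0; congr mkpt; ring.
left; exists (u / s), (k * s ^+ 3); split; first by rewrite mulf_neq0 // expf_neq0.
by rewrite !scale_mkpt; congr mkpt; field.
Qed.

Lemma on_twisted_cubicZ k v :
  k != 0 -> on_twisted_cubic v -> on_twisted_cubic (k *: v).
Proof.
move=> k_neq0 [[t [c [c_neq0 ->]]] | [c [c_neq0 ->]]]; [left; exists t | right];
  by exists (k * c); rewrite mulf_neq0 // scalerA.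
Qed.

Lemma moebius_mx_cubic a b c d v : a * d - b * c != 0 ->
  on_twisted_cubic v -> on_twisted_cubic (v *m moebius_mx a b c d).
Proof.
move=> det_neq0 [[t [k [k_neq0 ->]]] | [k [k_neq0 ->]]]; rewrite -scalemxAl.
  rewrite moebius_mx_cubic_pt; apply: on_twisted_cubic_hom => //.
  apply: contraR det_neq0; rewrite negb_or !negbK => /andP [/eqP at0 /eqP ct0].
  have -> : a * d - b * c = (c * t + d) * a - (a * t + b) * c by ring.
  by rewrite at0 ct0 !mul0r subrr.
rewrite moebius_mx_cubic_inf; apply: on_twisted_cubic_hom => //.
apply: contraR det_neq0; rewrite negb_or !negbK => /andP [/eqP -> /eqP ->].
by rewrite !mul0r mulr0 subrr.
Qed.

Lemma in_Gq_moebius_mx a b c d :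
  a * d - b * c != 0 -> in_Gq (moebius_mx a b c d).
Proof.
move=> det_neq0; split; first exact: moebius_mx_unit.
move=> v _; split; first exact: moebius_mx_cubic.
move=> vM_cubic.
have det' : d * a - (- b) * (- c) != 0 by rewrite mulrNN [d * a]mulrC.
have det3_neq0 : (a * d - b * c) ^+ 3 != 0 by rewrite expf_neq0.
have := moebius_mx_cubic det' vM_cubic.
rewrite -mulmxA moebius_mx_adj mul_mx_scalar.
move=> /(on_twisted_cubicZ (invr_neq0 det3_neq0)).
by rewrite scalerA mulVf // scale1r.
Qed.

Lemma sub_adds_rVP n (u w v : 'rV[F]_n) :
  reflect (exists a b, v = a *: u + b *: w) (v <= u + w)%MS.
Proof.
apply: (iffP sub_addsmxP) => [[[A B] /= ->] | [a [b ->]]].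
  by exists (A 0 0), (B 0 0); rewrite -!mul_scalar_mx -!mx11_scalar.
by exists (a%:M, b%:M); rewrite /= !mul_scalar_mx.
Qed.

Lemma on_lineE (u w v : 'rV[F]_4) :
  on_line u w v <-> v != 0 /\ (v <= u + w)%MS.
Proof. by split=> -[v_neq0 /sub_adds_rVP]. Qed.

Lemma rank_adds_rV_le2 n (u w : 'rV[F]_n) : (\rank (u + w) <= 2)%N.
Proof.
apply: leq_trans (leq_of_leqif (mxrank_adds_leqif u w)) _.
exact: (leq_add (rank_leq_row u) (rank_leq_row w)).
Qed.

Lemma rank_adds_rV n (u w : 'rV[F]_n) :
  u != 0 -> ~~ (w <= u)%MS -> \rank (u + w) = 2.
Proof.
move=> u_neq0 w_notin_u; apply/eqP; rewrite eqn_leq rank_adds_rV_le2 /=.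
have u_lt_uw : (u < u + w)%MS by rewrite ltmxE addsmxSl addsmx_sub submx_refl.
by have := rank_ltmx u_lt_uw; rewrite rank_rV u_neq0.
Qed.

(* Inclusion suffices: M is invertible and both row spaces have rank 2. *)
Lemma same_line_orbit_sub (M : 'M[F]_4) (u1 w1 u2 w2 : 'rV[F]_4) :
  in_Gq M -> \rank (u1 + w1) = 2 ->
  (u1 *m M <= u2 + w2)%MS -> (w1 *m M <= u2 + w2)%MS ->
  same_line_orbit u1 w1 u2 w2.
Proof.
move=> GqM rank_uw1 u1M w1M; exists M; split=> // v v_neq0.
have M_free : row_free M by rewrite row_free_unit; case: GqM.
have sub_uw2 : ((u1 + w1)%MS *m M <= u2 + w2)%MS by rewrite addsmxMr addsmx_sub u1M.
have rank_uw1M : \rank ((u1 + w1)%MS *m M) = 2 by rewrite mxrankMfree.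
have /eqmxP eq_uw2 : ((u1 + w1)%MS *m M == u2 + w2)%MS.
  apply/andP; split=> //; rewrite -(mxrank_leqif_sup sub_uw2) eqn_leq.
  by rewrite mxrank_leqif_sup // rank_uw1M rank_adds_rV_le2.
by rewrite !on_lineE -eq_uw2 submxMfree // mulmx_free_eq0.
Qed.

Lemma rank_line_Lc : \rank (mkpt (F := F) 1 0 0 1 + mkpt 0 0 1 0) = 2.
Proof.
apply: rank_adds_rV.
  by apply/eqP => /rowP /(_ i0); rewrite !mxE; apply/eqP; rewrite oner_eq0.
apply/sub_rVP => -[k /rowP /(_ i2)]; rewrite !mxE /= mulr0.
by apply/eqP; rewrite oner_eq0.
Qed.

Lemma sub_line_ell_third (x0 x1 x2 x3 : F) : 3%:R != 0 :> F ->
  x0 = x2 -> 3%:R * x1 + x3 = 0 ->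
  (mkpt x0 x1 x2 x3 <= mkpt 0 (- 3%:R^-1) 0 1 + mkpt 1 0 1 0)%MS.
Proof.
move=> three_neq0 -> /eqP; rewrite addrC addr_eq0 => /eqP ->.
apply/sub_adds_rVP; exists (- (3%:R * x1)), x2.
by rewrite !scale_mkpt add_mkpt; congr mkpt; field.
Qed.

End ProjectiveSpace.

Section OrbitMap.
Variables (F : fieldType) (z w i : F).
Hypotheses (two_neq0 : 2%:R != 0 :> F) (three_neq0 : 3%:R != 0 :> F).
Hypotheses (z_cube : z ^+ 3 = 2%:R) (w_fourth : w ^+ 4 = - 3%:R).
Hypothesis i_sqr : i ^+ 2 = -1.

(* A solution of x0 = x2, 3 x1 + x3 = 0 for the images of the two points
   spanning L_c; [ring:] checks it modulo z_cube, w_fourth and i_sqr. *)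
Let a := - z ^+ 2 * (i * w ^+ 2 - 1).
Let b := w ^+ 2 - 1.
Let c := - z ^+ 2 * w * (i - 1).
Let d := - w * (w ^+ 2 + 1 + 2%:R * i).

Lemma orbit_map_det : a * d - b * c != 0.
Proof.
have det_inv : (a * d - b * c) * (z * w * (1 + 2%:R * i - w ^+ 2)) = 48%:R.
  by rewrite /a /b /c /d; ring: z_cube w_fourth i_sqr.
apply/eqP => det0; move: det_inv; rewrite det0 mul0r => /eqP; apply/negP.
by rewrite eq_sym (_ : 48 = 2 * 2 * 2 * 2 * 3)%N // !natrM !mulf_neq0.
Qed.

Lemma orbit_map_Lc_ell :
  same_line_orbit (mkpt (F := F) 1 0 0 1) (mkpt 0 0 1 0)
                  (mkpt 0 (- 3%:R^-1) 0 1) (mkpt 1 0 1 0).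
Proof.
apply: (same_line_orbit_sub (in_Gq_moebius_mx orbit_map_det) (rank_line_Lc F));
  rewrite mkpt_mulmx !mxE /=; apply: sub_line_ell_third => //;
  by rewrite /a /b /c /d; ring: z_cube w_fourth i_sqr.
Qed.

End OrbitMap.

Section FiniteField.
Variable F : finFieldType.

Lemma natf_card_finField : #|F|%:R = 0 :> F.
Proof. by rewrite -cardsT -FinRing.zmodXgE expg_cardG ?inE. Qed.

Lemma natf_neq0_finField p : prime p -> ~~ (p %| #|F|)%N -> p%:R != 0 :> F.
Proof.
move=> p_pr; apply: contra => /eqP p0.
have pF : p \in [pchar F] by rewrite inE p_pr p0 eqxx.
by rewrite (dvdn_pcharf pF) natf_card_finField.
Qed.

Lemma exists_expf_neq1 n :
  (0 < n < #|F|.-1)%N -> exists2 x : F, x != 0 & x ^+ n != 1.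
Proof.
move=> /andP [n_gt0 n_lt].
have [/existsP [x /andP [x_neq0 xn]] | /existsPn all1] :=
  boolP [exists x : F, (x != 0) && (x ^+ n != 1)]; first by exists x.
have p_neq0 : 'X^n - 1 != 0 :> {poly F}.
  by rewrite -size_poly_eq0 size_XnsubC.
have roots : all (root ('X^n - 1)) (enum [pred x : F | x != 0]).
  apply/allP => x; rewrite mem_enum inE => x_neq0.
  by move: (all1 x); rewrite x_neq0 negbK /root !hornerE subr_eq0.
have := max_poly_roots p_neq0 roots (enum_uniq _).
by rewrite -cardE cardC1 size_XnsubC // ltnS leqNgt n_lt.
Qed.

Lemma finField_sqrtN1 : (4 %| #|F|.-1)%N -> exists i : F, i ^+ 2 = -1.
Proof.
move=> /dvdnP [k q1]; have q_gt1 : (1 < #|F|)%N := finNzRing_gt1 F.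
have [a a_neq0 a2k] : exists2 a : F, a != 0 & a ^+ (k * 2) != 1.
  have k_gt0 : (0 < k)%N by move: q1; rewrite -subn1; lia.
  by apply: exists_expf_neq1; rewrite q1 ltn_pmul2l // muln_gt0 k_gt0.
have a4k : a ^+ (k * 2 * 2) = 1.
  apply: (mulfI a_neq0); rewrite mulr1 -exprS -mulnA -q1 prednK ?expf_card //.
  exact: ltnW.
exists (a ^+ k); apply/eqP.
have : (a ^+ k ^+ 2) ^+ 2 == 1 by rewrite -!exprM mulnA a4k.
by rewrite sqrf_eq1 -exprM (negPf a2k).
Qed.

End FiniteField.

Theorem lemma7p5 (F : finFieldType) (q : nat) (hq : #|F| = q)
  (hq12 : (q %% 12 = 1)%N)
  (hcube : exists x : F, x ^+ 3 = - (2%:R)^-1)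
  (hfourth : exists y : F, y ^+ 4 = - (3%:R)^-1) :
  (exists s : F, s ^+ 2 = - (3%:R)^-1) /\
  same_line_orbit (mkpt (F:=F) 1 0 0 1) (mkpt 0 0 1 0)
                  (mkpt 0 (- (3%:R)^-1) 0 1) (mkpt 1 0 1 0).
Proof.
have two_neq0 : 2%:R != 0 :> F by apply: natf_neq0_finField => //; rewrite hq; lia.
have three_neq0 : 3%:R != 0 :> F by apply: natf_neq0_finField => //; rewrite hq; lia.
have [i i_sqr] : exists i : F, i ^+ 2 = -1.
  by apply: finField_sqrtN1; rewrite hq -subn1; lia.
have [x x3] := hcube; have [y y4] := hfourth.
split; first by exists (y ^+ 2); rewrite -exprM.
have z_cube : ((- x)^-1) ^+ 3 = 2%:R.
  have negx3 : (- x) ^+ 3 = - x ^+ 3 by ring.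
  by rewrite exprVn negx3 x3 opprK invrK.
have w_fourth : (y^-1) ^+ 4 = - 3%:R by rewrite exprVn y4 invrN invrK.
exact: orbit_map_Lc_ell two_neq0 three_neq0 z_cube w_fourth i_sqr.
Qed.
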